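(* Let $E$ be a finite set and let $\tau:2^{E}\rightarrow 2^{E}$ be a closure operator. Define $V:2^{E}\rightarrow 2^{E}$ by $V(X)=E-\tau(X)$. Then $(E,V)$ is a violator space.
   Context: A closure operator on $E$ is a map $\tau:2^E\to 2^E$ satisfying, for all $X,Y\subseteq E$: (C1) $X\subseteq\tau(X)$; (C2) $X\subseteq Y\Rightarrow \tau(X)\subseteq\tau(Y)$; (C3) $\tau(\tau(X))=\tau(X)$. A violator space is a pair $(H,V)$ with $H$ a finite set and $V:2^H\to 2^H$ such that (Consistency) $G\cap V(G)=\emptyset$ for all $G\subseteq H$, and (Locality) for all $F\subseteq G\subseteq H$ with $G\cap V(F)=\emptyset$ we have $V(G)=V(F)$. *)

From mathcomp Require Import all_boot.
Set Implicit Arguments. Unset Strict Implicit. Unset Printing Implicit Defensive.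

Definition closure_operator (E : finType) (tau : {set E} -> {set E}) : Prop :=
  [/\ (forall X : {set E}, X \subset tau X),
      (forall X Y : {set E}, X \subset Y -> tau X \subset tau Y)
    & (forall X : {set E}, tau (tau X) = tau X)].

Definition violator_space (H : finType) (V : {set H} -> {set H}) : Prop :=
  (forall G : {set H}, G :&: V G = set0) /\
  (forall F G : {set H}, F \subset G -> G :&: V F = set0 -> V G = V F).

From mathcomp Require Import all_boot.

(* V(X) is the complement of tau(X), so G :&: V(F) = set0 says G \subset tau F.
   Consistency is extensivity; locality holds because F \subset G \subset tau F
   squeezes tau G between tau F and tau (tau F) = tau F. *)

Lemma closure_squeeze {E : finType} {tau : {set E} -> {set E}} {F G : {set E}} :
  closure_operator tau -> F \subset G -> G \subset tau F -> tau G = tau F.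
Proof.
case=> _ mono idem FG GtF.
apply/eqP; rewrite eqEsubset (mono _ _ FG) andbT.
by rewrite -(idem F) mono.
Qed.

Lemma setI_setTD_eq0 (E : finType) (A B : {set E}) :
  (A :&: ([set: E] :\: B) == set0) = (A \subset B).
Proof. by rewrite setTD -setDE setD_eq0. Qed.

Theorem mainTheorem1 (E : finType) (tau : {set E} -> {set E}) :
  closure_operator tau ->
  violator_space (fun X : {set E} => [set: E] :\: tau X).
Proof.
move=> tauP; split=> [G | F G FG /eqP GVF].
- by apply/eqP; rewrite setI_setTD_eq0; case: tauP.
- by rewrite (closure_squeeze tauP FG) // -setI_setTD_eq0.
Qed.
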